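(* Let $n\ge1$, $m\ge0$ and let $v,u$ be vertices of $Y_{n,m}$. Then $v-u$ is a vertex of $Z_{n,m}$ and $d_{Y_{n,m}}(v,u)=d_{Z_{n,m}}(v-u,0)$.
   Context: The Yoke graph $Y_{n,m}$ has vertices the tuples $v=(v_0,\dots,v_{m+1})$ with $v_0,v_{m+1}\in\mathbb{Z}_n$, $v_1,\dots,v_m\in\{0,1\}$, $\sum v_i\equiv0\pmod n$; the dYoke graph $Z_{n,m}$ is defined identically but with $v_1,\dots,v_m\in\{-1,0,1\}$. In both, $u\sim v$ iff there is $0\le i\le m$ with $u_j=v_j$ for $j\notin\{i,i+1\}$ and either ($u_i=v_i+1$, $u_{i+1}=v_{i+1}-1$) or ($u_i=v_i-1$, $u_{i+1}=v_{i+1}+1$), bucket entries computed mod $n$. The difference $v-u$ is taken entrywise (buckets mod $n$), and $0$ is the all-zero vertex. *)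

From mathcomp Require Import all_boot all_order all_algebra.
Set Implicit Arguments. Unset Strict Implicit. Unset Printing Implicit Defensive.
Import GRing.Theory Num.Theory.
Local Open Scope ring_scope.

(* A vertex is a sequence v = [:: v_0; ...; v_(m+1)] of integers.
   Positions 0 and m+1 are the buckets; they hold an element of Z_n,
   represented by its canonical residue in [0, n). *)
Definition is_bucket (m j : nat) : bool := (j == 0)%N || (j == m.+1)%N.

Definition yoke_vertex (n m : nat) (mid : pred int) (v : seq int) : bool :=
  [&& size v == m.+2,
      [forall j : 'I_m.+2,
         if is_bucket m j then (0 <= v`_j) && (v`_j < n%:Z) else mid v`_j]
    & ((\sum_(j < m.+2) v`_j) == 0 %[mod n%:Z])%Z].

Definition Y_mid : pred int := fun x => (x == 0) || (x == 1).
Definition Z_mid : pred int := fun x => [|| x == -1, x == 0 | x == 1].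

Definition Yvert (n m : nat) : pred (seq int) := yoke_vertex n m Y_mid.
Definition Zvert (n m : nat) : pred (seq int) := yoke_vertex n m Z_mid.

Definition entry_eq (n m j : nat) (a b : int) : bool :=
  if is_bucket m j then (a == b %[mod n%:Z])%Z else a == b.

Definition yoke_adj (n m : nat) (u v : seq int) : bool :=
  [exists i : 'I_m.+1,
     [forall j : 'I_m.+2,
        ((j : nat) != i) && ((j : nat) != i.+1) ==> entry_eq n m j u`_j v`_j]
     && ((entry_eq n m i u`_i (v`_i + 1) && entry_eq n m i.+1 u`_i.+1 (v`_i.+1 - 1))
      || (entry_eq n m i u`_i (v`_i - 1) && entry_eq n m i.+1 u`_i.+1 (v`_i.+1 + 1)))].

Fixpoint walk (V : pred (seq int)) (E : rel (seq int)) (k : nat)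
    (x y : seq int) : Prop :=
  match k with
  | 0 => x = y /\ V x
  | k'.+1 => exists z, [/\ V x, E x z & walk V E k' z y]
  end.

(* graph distance: [is_dist V E x y k] iff d(x,y) = k (a shortest walk has
   length k); d(x,y) = infinity iff no k satisfies it. *)
Definition is_dist (V : pred (seq int)) (E : rel (seq int)) (x y : seq int)
    (k : nat) : Prop :=
  walk V E k x y /\ forall j, walk V E j x y -> (k <= j)%N.

Definition vdiff (n m : nat) (v u : seq int) : seq int :=
  [seq (if is_bucket m j then ((v`_j - u`_j) %% n%:Z)%Z else v`_j - u`_j)
  | j <- iota 0 m.+2].

Definition zero_vertex (m : nat) : seq int := nseq m.+2 0.

(* A walk from v to u is governed by the net numbers f_j of units it carries
   across the edges (j, j+1), j = 0..m.  They are the prefix sums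
   f_j = b + sum_(0 < l <= j) (v_l - u_l), where only b = f_0 is free, subject
   to b = v_0 - u_0 (mod n) since bucket 0 lives in Z_n.  A move changes exactly
   one f_j, by 1, so a walk of length k, in Y as in Z, yields some b with
   potential sum_j |f_j| <= k.  Conversely, in Y a positive f_i lets us go down
   to a position holding a unit and then up to an edge e with f_e > 0 and empty
   head; pushing that unit across e lowers the potential by one (a negative
   flow is handled from the side of u).  So d_Y(v, u) is the least potential.
   Differences map Y-walks from v to u to Z-walks from v - u to 0, and the
   pairs (v, u) and (v - u, 0) have the same flows, which squeezes
   d_Z(v - u, 0) between the same bounds. *)

From mathcomp Require Import all_boot all_order all_algebra zify ring.
Set Implicit Arguments. Unset Strict Implicit. Unset Printing Implicit Defensive.
Import GRing.Theory Num.Theory.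
Local Open Scope ring_scope.

(** * Vertices and adjacency *)

Definition entry_modulus (n m j : nat) : int := if is_bucket m j then n%:Z else 0.

Lemma entry_eqE n m j a b : entry_eq n m j a b = (entry_modulus n m j %| a - b)%Z.
Proof.
by rewrite /entry_eq /entry_modulus; case: ifP; rewrite ?eqz_mod_dvd // dvd0z subr_eq0.
Qed.

Lemma dvdz_entry_modulus n m j : (n%:Z %| entry_modulus n m j)%Z.
Proof. by rewrite /entry_modulus; case: ifP; rewrite ?dvdzz ?dvdz0. Qed.

Lemma entry_modulus0 n m : entry_modulus n m 0 = n.
Proof. by []. Qed.

Lemma is_bucketN m j : (j < m.+2)%N -> (~~ is_bucket m j) = (0 < j <= m)%N.
Proof. by rewrite /is_bucket; lia. Qed.

Lemma entry_eq_mid n m j a b : (0 < j <= m)%N -> entry_eq n m j a b = (a == b).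
Proof. by move=> mid_j; rewrite /entry_eq ifN // is_bucketN //; lia. Qed.

Lemma Y_midE (x : int) : Y_mid x = (0 <= x <= 1).
Proof. by rewrite /Y_mid; lia. Qed.

Lemma Z_midE (x : int) : Z_mid x = (-1 <= x <= 1).
Proof. by rewrite /Z_mid; lia. Qed.

Lemma yoke_vertexP n m mid w : reflect
  [/\ size w = m.+2,
      forall j, (j < m.+2)%N ->
        if is_bucket m j then 0 <= w`_j < n%:Z else mid w`_j
    & (n%:Z %| \sum_(j < m.+2) w`_j)%Z]
  (yoke_vertex n m mid w).
Proof.
rewrite /yoke_vertex eqz_mod_dvd subr0.
apply: (iffP and3P) => [[/eqP size_w /forallP entries sum_w] | [size_w entries sum_w]].
  by split=> // j lt_j; exact: (entries (Ordinal lt_j)).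
by split=> //; [rewrite size_w | apply/forallP => j; exact: entries].
Qed.

Lemma Yvert_mid n m w j : Yvert n m w -> (0 < j <= m)%N -> 0 <= w`_j <= 1.
Proof.
case/yoke_vertexP=> _ entries _ mid_j; have lt_j : (j < m.+2)%N by lia.
by have := entries j lt_j; rewrite ifN ?is_bucketN // Y_midE.
Qed.

Lemma nth_vdiff n m v w j : (j < m.+2)%N ->
  (vdiff n m v w)`_j =
    if is_bucket m j then ((v`_j - w`_j) %% n%:Z)%Z else v`_j - w`_j.
Proof. by move=> lt_j; rewrite (nth_map 0%N) ?size_iota // nth_iota. Qed.

Lemma vdiff_congr n m v w j : (j < m.+2)%N ->
  (entry_modulus n m j %| (vdiff n m v w)`_j - (v`_j - w`_j))%Z.
Proof.
move=> lt_j; rewrite nth_vdiff // /entry_modulus.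
by case: ifP => _; rewrite ?subrr ?dvdz0 // -eqz_mod_dvd modz_mod.
Qed.

Lemma nth_zero_vertex m j : (zero_vertex m)`_j = 0.
Proof. by rewrite nth_nseq; case: ifP. Qed.

Lemma size_vdiff n m v w : size (vdiff n m v w) = m.+2.
Proof. by rewrite size_map size_iota. Qed.

Lemma vdiff_self n m u : vdiff n m u u = zero_vertex m.
Proof.
apply: (@eq_from_nth _ 0) => [|j]; first by rewrite size_vdiff size_nseq.
rewrite size_vdiff => lt_j; rewrite nth_vdiff // nth_zero_vertex subrr.
by case: ifP; rewrite ?mod0z.
Qed.

Lemma vdiff_vertex n m (mid mid' : pred int) v w : (0 < n)%N ->
  yoke_vertex n m mid v -> (n%:Z %| \sum_(j < m.+2) w`_j)%Z ->
  (forall j, (0 < j <= m)%N -> mid' (v`_j - w`_j)) ->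
  yoke_vertex n m mid' (vdiff n m v w).
Proof.
move=> n_gt0 /yoke_vertexP[_ _ sum_v] sum_w mid_vw; apply/yoke_vertexP; split.
- exact: size_vdiff.
- move=> j lt_j; rewrite nth_vdiff //; case bucket_j: (is_bucket m j).
    by rewrite modz_ge0 ?ltz_pmod; lia.
  by apply: mid_vw; rewrite -is_bucketN // bucket_j.
have reduce : (n%:Z %| \sum_(j < m.+2)
    ((vdiff n m v w)`_j - (v`_j - w`_j)))%Z.
  by apply: rpred_sum => j _; apply: dvdz_trans (dvdz_entry_modulus n m j) _;
     exact: vdiff_congr.
have -> : \sum_(j < m.+2) (vdiff n m v w)`_j =
    \sum_(j < m.+2) ((vdiff n m v w)`_j - (v`_j - w`_j))
    + (\sum_(j < m.+2) v`_j - \sum_(j < m.+2) w`_j).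
  by rewrite !sumrB subrK.
by rewrite rpredD ?rpredB.
Qed.

Lemma Zvert_vdiff n m v u : (0 < n)%N -> Yvert n m v -> Yvert n m u ->
  Zvert n m (vdiff n m v u).
Proof.
move=> n_gt0 Yv Yu; apply: (vdiff_vertex n_gt0 Yv).
  by case/yoke_vertexP: Yu.
move=> j mid_j; have := Yvert_mid Yv mid_j; have := Yvert_mid Yu mid_j.
by rewrite Z_midE; lia.
Qed.

Definition edge_delta (i l : nat) : int := (l == i)%:Z - (l == i.+1)%:Z.

Lemma edge_delta_tail i : edge_delta i i = 1.
Proof. by rewrite /edge_delta eqxx ltn_eqF. Qed.

Lemma edge_delta_head i : edge_delta i i.+1 = -1.
Proof. by rewrite /edge_delta eqxx gtn_eqF. Qed.

Lemma edge_delta0 i : edge_delta i 0 = (i == 0%N)%:Z.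
Proof. by rewrite /edge_delta eq_sym subr0. Qed.

Lemma edge_delta_off i l : l != i -> l != i.+1 -> edge_delta i l = 0.
Proof. by rewrite /edge_delta => /negbTE-> /negbTE->. Qed.

Lemma yoke_adjP n m x z : reflect
  (exists i s, [/\ (i < m.+1)%N, s = 1 \/ s = -1 &
     forall l, (l < m.+2)%N -> entry_eq n m l x`_l (z`_l + s * edge_delta i l)])
  (yoke_adj n m x z).
Proof.
apply: (iffP existsP) => [[i /andP[/forallP off moved]] | [i [s [lt_i sign move]]]].
  have [s sign [move_i move_i1]] : exists2 s : int, s = 1 \/ s = -1 &
      entry_eq n m i x`_i (z`_i + s) /\ entry_eq n m i.+1 x`_i.+1 (z`_i.+1 - s).
    by case/orP: moved => /andP[? ?]; [exists 1; [left|] | exists (-1); [right|]];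
       rewrite ?opprK.
  exists (i : nat), s; split=> // l lt_l.
  case: (eqVneq l i) => [-> | ne_i]; last case: (eqVneq l i.+1) => [-> | ne_i1].
  - by rewrite edge_delta_tail mulr1.
  - by rewrite edge_delta_head mulrN1.
  - rewrite edge_delta_off // mulr0 addr0.
    by have := off (Ordinal lt_l); rewrite /= ne_i ne_i1.
exists (Ordinal lt_i); apply/andP; split.
  apply/forallP => l; apply/implyP => /andP[ne_i ne_i1].
  by have := move l (ltn_ord l); rewrite edge_delta_off // mulr0 addr0.
have := move i (leqW lt_i); have := move i.+1 lt_i.
rewrite edge_delta_tail edge_delta_head mulr1 mulrN1 => move_i1 move_i.
by apply/orP; case: sign => s_val; [left | right]; rewrite s_val ?opprK in move_i move_i1;
   rewrite move_i move_i1.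
Qed.

Lemma yoke_adj_sym n m x z : yoke_adj n m x z -> yoke_adj n m z x.
Proof.
case/yoke_adjP=> i [s [lt_i sign move]]; apply/yoke_adjP; exists i, (- s); split=> //.
  by case: sign => ->; rewrite ?opprK; [right | left].
move=> l lt_l; have := move l lt_l; rewrite !entry_eqE -rpredN.
by rewrite (_ : z`_l - _ = - (x`_l - (z`_l + s * edge_delta i l))) //; ring.
Qed.

Lemma vdiff_adj n m x z u :
  yoke_adj n m x z -> yoke_adj n m (vdiff n m x u) (vdiff n m z u).
Proof.
case/yoke_adjP=> i [s [lt_i sign move]]; apply/yoke_adjP; exists i, s; split=> // l lt_l.
have := move l lt_l; rewrite !entry_eqE => move_l.
have := vdiff_congr n x u lt_l; have := vdiff_congr n z u lt_l.
set dx := (vdiff n m x u)`_l; set dz := (vdiff n m z u)`_l => congr_z congr_x.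
rewrite (_ : dx - _ = x`_l - (z`_l + s * edge_delta i l)
                      + (dx - (x`_l - u`_l)) - (dz - (z`_l - u`_l))); last by ring.
by apply: rpredB => //; exact: rpredD.
Qed.

Lemma walk_vdiff n m u j x : (0 < n)%N -> Yvert n m u ->
  walk (Yvert n m) (yoke_adj n m) j x u ->
  walk (Zvert n m) (yoke_adj n m) j (vdiff n m x u) (zero_vertex m).
Proof.
move=> n_gt0 Yu; elim: j x => [|j IH] x /= => [[-> _] | [z [Yx adj_xz walk_z]]].
  by rewrite vdiff_self; split=> //; rewrite -(vdiff_self n m u); exact: Zvert_vdiff.
by exists (vdiff n m z u); split; [exact: Zvert_vdiff | exact: vdiff_adj | exact: IH].
Qed.

Lemma walk_rcons (V : pred (seq int)) (E : rel (seq int)) j x y z :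
  walk V E j x y -> E y z -> V z -> walk V E j.+1 x z.
Proof.
elim: j x => [|j IH] x /= => [[-> Vy] Eyz Vz | [w [Vx Exw walk_w]] Eyz Vz].
  by exists z.
by exists w; split=> //; exact: IH.
Qed.

Lemma is_dist_transfer (V V' : pred (seq int)) (E E' : rel (seq int)) x y x' y' :
  (forall j, walk V E j x y -> walk V' E' j x' y') ->
  (forall j, walk V' E' j x' y' -> exists2 j', (j' <= j)%N & walk V E j' x y) ->
  forall k, is_dist V E x y k <-> is_dist V' E' x' y' k.
Proof.
move=> fwd bwd k; split=> [[walk_k min_k] | [walk_k min_k]].
  split=> [|j /bwd[j' le_j' /min_k le_k]]; first exact: fwd.
  exact: leq_trans le_k le_j'.
have [j' le_j' walk_j'] := bwd _ walk_k.
have -> : k = j' by apply/eqP; rewrite eqn_leq min_k ?le_j' //; exact: fwd.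
by split=> // j /fwd /min_k; exact: leq_trans.
Qed.

(** * Flows and the potential *)

(* [flow b x y j] is the net number of units a walk from [x] to [y] carries
   across the edge (j, j.+1) in the increasing direction, when it carries [b]
   across (0, 1). *)
Fixpoint flow (b : int) (x y : seq int) (j : nat) : int :=
  if j is j'.+1 then flow b x y j' + (x`_j - y`_j) else b.

Definition potential (m : nat) (b : int) (x y : seq int) : int :=
  \sum_(j < m.+1) `|flow b x y j|.

(* Bucket 0 is only known modulo [n], and so is the flow across (0, 1). *)
Definition initial_flow (n : nat) (x y : seq int) (b : int) : bool :=
  (n%:Z %| b - (x`_0 - y`_0))%Z.

Definition flow_cost_le (n m : nat) (x y : seq int) (k : nat) : Prop :=
  exists2 b : int, initial_flow n x y b & potential m b x y <= k%:Z.

Lemma flow_self b x j : flow b x x j = b.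
Proof. by elim: j => //= j ->; rewrite subrr addr0. Qed.

Lemma flow_sym b x y j : flow (- b) y x j = - flow b x y j.
Proof. by elim: j => //= j ->; rewrite opprD opprB. Qed.

Lemma potential_sym m b x y : potential m (- b) y x = potential m b x y.
Proof. by apply: eq_bigr => j _; rewrite flow_sym normrN. Qed.

Lemma initial_flow_sym n x y b : initial_flow n x y b -> initial_flow n y x (- b).
Proof.
by rewrite /initial_flow (_ : - b - _ = - (b - (x`_0 - y`_0))) ?rpredN //; ring.
Qed.

Lemma flow_cost_le_sym n m x y k : flow_cost_le n m x y k -> flow_cost_le n m y x k.
Proof.
by case=> b init_b pot_b; exists (- b); [exact: initial_flow_sym | rewrite potential_sym].
Qed.

Lemma eq_potential m b x y x' y' :
  (forall l, (0 < l <= m)%N -> x`_l - y`_l = x'`_l - y'`_l) ->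
  potential m b x y = potential m b x' y'.
Proof.
move=> eq_mid; apply: eq_bigr => [[j /= lt_j]] _; congr `|_|.
by elim: j lt_j => //= j IH lt_j; rewrite IH 1?eq_mid //; lia.
Qed.

Lemma flow_move m (b b' : int) (x z y : seq int) i (s : int) :
  b = b' + s * (i == 0%N)%:Z ->
  (forall l, (0 < l <= m)%N -> x`_l - z`_l = s * edge_delta i l) ->
  forall j, (j <= m)%N -> flow b x y j = flow b' z y j + s * (j == i)%:Z.
Proof.
move=> -> move_mid; elim=> [|j IH] lt_j /=; first by rewrite eq_sym.
have := move_mid j.+1 lt_j; rewrite IH ?(ltnW lt_j) // /edge_delta eqSS.
case ji: (j == i).
  by move/eqP: ji => ->; rewrite gtn_eqF //= => move_i; lia.
by case: (j.+1 == i) => /= move_j; lia.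
Qed.

Lemma sum_normr_bump k i (f g : nat -> int) (s : int) : (i < k)%N ->
  (forall j, (j < k)%N -> f j = g j + s * (j == i)%:Z) ->
  \sum_(j < k) `|f j| = \sum_(j < k) `|g j| + (`|g i + s| - `|g i|).
Proof.
move=> lt_i fg; rewrite (bigD1 (Ordinal lt_i)) // [in RHS](bigD1 (Ordinal lt_i)) //=.
rewrite fg // eqxx mulr1.
rewrite (eq_bigr (fun j : 'I_k => `|g j|)); first by ring.
by move=> j; rewrite -val_eqE /= => /negbTE ne_j; rewrite fg // ne_j mulr0 addr0.
Qed.

Lemma potential_move m (b b' : int) (x z y : seq int) i (s : int) : (i <= m)%N ->
  b = b' + s * (i == 0%N)%:Z ->
  (forall l, (0 < l <= m)%N -> x`_l - z`_l = s * edge_delta i l) ->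
  potential m b x y = potential m b' z y + (`|flow b' z y i + s| - `|flow b' z y i|).
Proof.
by move=> le_i eq_b move_mid; apply: sum_normr_bump => //; exact: flow_move eq_b move_mid.
Qed.

Lemma flow_cost_le_walk n m (V : pred (seq int)) k x y :
  walk V (yoke_adj n m) k x y -> flow_cost_le n m x y k.
Proof.
elim: k x => [|k IH] x /= => [[-> _] | [z [_ /yoke_adjP[i [s [lt_i sign move]]]]]].
  exists 0; first by rewrite /initial_flow subrr subr0 dvdz0.
  by rewrite /potential big1 // => j _; rewrite flow_self.
move=> /IH[b init_b pot_b].
have move_mid l : (0 < l <= m)%N -> x`_l - z`_l = s * edge_delta i l.
  move=> mid_l; have := move l; rewrite entry_eq_mid //.
  by move/(_ _)/eqP->; [ring | lia].
exists (b + s * (i == 0%N)%:Z).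
  have := move 0%N isT; rewrite entry_eqE entry_modulus0 => move_0.
  rewrite /initial_flow (_ : b + _ - _ =
    b - (z`_0 - y`_0) - (x`_0 - (z`_0 + s * edge_delta i 0))).
    exact: rpredB.
  by rewrite edge_delta0; ring.
rewrite (@potential_move m _ b x z y i s lt_i erefl move_mid).
have : `|flow b z y i + s| - `|flow b z y i| <= 1 by case: sign => ->; lia.
lia.
Qed.

Lemma flow_cost_le_vdiff n m v u k :
  flow_cost_le n m (vdiff n m v u) (zero_vertex m) k -> flow_cost_le n m v u k.
Proof.
case=> b init_b pot_b; exists b.
  have := vdiff_congr n v u (isT : (0 < m.+2)%N); rewrite entry_modulus0.
  rewrite /initial_flow nth_zero_vertex subr0 in init_b * => congr_0.
  rewrite (_ : b - _ = b - (vdiff n m v u)`_0 + ((vdiff n m v u)`_0 - (v`_0 - u`_0))).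
    exact: rpredD.
  by ring.
rewrite (eq_potential _ _ (x' := vdiff n m v u) (y' := zero_vertex m)) // => l mid_l.
by rewrite nth_vdiff ?ifN ?is_bucketN ?nth_zero_vertex ?subr0 //; lia.
Qed.

(** * Pushing units down the potential *)

Lemma sum_indicator k i : (i < k)%N -> \sum_(l < k) ((l : nat) == i)%:Z = 1 :> int.
Proof.
move=> lt_i; rewrite (bigD1 (Ordinal lt_i)) //= eqxx big1 ?addr0 // => l.
by rewrite -val_eqE /= => /negbTE->.
Qed.

Lemma sum_edge_delta k i : (i.+1 < k)%N -> \sum_(l < k) edge_delta i l = 0.
Proof. by move=> lt_i1; rewrite sumrB !sum_indicator ?subrr //; exact: ltnW. Qed.

Section Push.
Variables (n m : nat) (v u : seq int) (b : int).
Hypotheses (Yv : Yvert n m v) (Yu : Yvert n m u).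
Local Notation F := (flow b v u).

Lemma source_below i : (i <= m)%N -> 0 < F i ->
  exists a, [/\ (a <= m)%N, 0 < F a & a = 0%N \/ v`_a = 1].
Proof.
elim: i => [|i IH] le_i F_i; first by exists 0%N; split=> //; left.
have mid_i1 : (0 < i.+1 <= m)%N by [].
move: F_i => /=; have := Yvert_mid Yv mid_i1; have := Yvert_mid Yu mid_i1.
(* [flow] and [Yvert_mid] elaborate [v`_i.+1] differently; [set] merges the
   two forms into one atom for [lia]. *)
set V := v`_i.+1; set U := u`_i.+1.
case: (eqVneq V 1) => [V1 _ _ F_i | /eqP V1 U01 V01 F_i].
  by exists i.+1; split=> //; right.
by apply: IH; [exact: ltnW | lia].
Qed.

Lemma push_edge_above a : (a <= m)%N -> 0 < F a -> a = 0%N \/ v`_a = 1 ->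
  exists e, [/\ (e <= m)%N, 0 < F e, e = 0%N \/ v`_e = 1 & e = m \/ v`_e.+1 = 0].
Proof.
move=> le_a; have [t def_m] : exists t, m = (a + t)%N by exists (m - a)%N; lia.
elim: t a def_m {le_a} => [|t IH] a def_m F_a full_a.
  by exists a; split=> //; [lia | left; lia].
have mid_a1 : (0 < a.+1 <= m)%N by lia.
have := Yvert_mid Yv mid_a1; have := Yvert_mid Yu mid_a1.
have /= := IH a.+1; set V := v`_a.+1; set U := u`_a.+1 => IH1.
case: (eqVneq V 1) => [V1 U01 _ | /eqP V1 _ V01].
  by apply: IH1; [lia | lia | right].
have V0 : V = 0 by lia.
by exists a; split=> //; [lia | right].
Qed.

Lemma push_step k i : (0 < n)%N -> initial_flow n v u b ->
  (i <= m)%N -> 0 < F i -> potential m b v u <= k.+1%:Z ->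
  exists v', [/\ Yvert n m v', yoke_adj n m v v' & flow_cost_le n m v' u k].
Proof.
move=> n_gt0 init_b le_i F_i pot_b.
have [a [le_a F_a full_a]] := source_below le_i F_i.
have [e [le_e F_e full_e empty_e]] := push_edge_above le_a F_a full_a.
(* Subtracting the edge vector of [e] moves a unit from [e] to [e.+1]. *)
pose w := mkseq (edge_delta e) m.+2.
have w_e l : (l < m.+2)%N -> w`_l = edge_delta e l by move=> lt_l; rewrite nth_mkseq.
set v' := vdiff n m v w.
have move_mid l : (0 < l <= m)%N -> v`_l - v'`_l = 1 * edge_delta e l.
  move=> mid_l; have lt_l : (l < m.+2)%N by lia.
  by rewrite nth_vdiff // ifN ?is_bucketN // w_e //; ring.
exists v'; split.
- apply: (vdiff_vertex n_gt0 Yv).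
    rewrite (eq_bigr (fun l : 'I_m.+2 => edge_delta e l)) => [|l _]; last exact: w_e.
    by rewrite sum_edge_delta ?dvdz0.
  move=> l mid_l; rewrite Y_midE w_e; last lia.
  have := Yvert_mid Yv mid_l; move: mid_l.
  case: (eqVneq l e) => [-> | ne_e]; last case: (eqVneq l e.+1) => [-> | ne_e1].
  + by rewrite edge_delta_tail; case: full_e; lia.
  + by rewrite edge_delta_head; case: empty_e; lia.
  + by rewrite edge_delta_off //; lia.
- apply/yoke_adjP; exists e, 1; split=> [| |l lt_l]; [lia | by left |].
  rewrite entry_eqE (_ : v`_l - _ = - (v'`_l - (v`_l - w`_l))).
    by rewrite rpredN vdiff_congr.
  by rewrite w_e //; ring.
have eq_b : b = b - (e == 0%N)%:Z + 1 * (e == 0%N)%:Z by ring.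
exists (b - (e == 0%N)%:Z).
  have := vdiff_congr n v w (isT : (0 < m.+2)%N).
  rewrite entry_modulus0 w_e // => congr_0.
  rewrite /initial_flow (_ : b - _ - _ =
    b - (v`_0 - u`_0) - (v'`_0 - (v`_0 - edge_delta e 0))).
    exact: rpredB.
  by rewrite edge_delta0; ring.
have := flow_move u eq_b move_mid le_e; rewrite eqxx.
rewrite (potential_move u le_e eq_b move_mid) in pot_b.
set F' := flow _ v' u e; lia.
Qed.

End Push.

Lemma norm_flow_le_potential m b x y i : (i <= m)%N ->
  `|flow b x y i| <= potential m b x y.
Proof.
move=> le_i; rewrite /potential (bigD1 (Ordinal (le_i : (i < m.+1)%N))) //=.
by rewrite lerDl sumr_ge0.
Qed.

Lemma bucket_eq n (a c : int) :
  0 <= a < n%:Z -> 0 <= c < n%:Z -> (n%:Z %| a - c)%Z -> a = c.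
Proof. by move=> a_range c_range; rewrite -eqz_mod_dvd => /eqP; rewrite !modz_small. Qed.

Lemma yoke_vertex_eq n m (mid mid' : pred int) v u :
  yoke_vertex n m mid v -> yoke_vertex n m mid' u ->
  (n%:Z %| v`_0 - u`_0)%Z -> (forall j, (0 < j <= m)%N -> v`_j = u`_j) -> v = u.
Proof.
move=> /yoke_vertexP[size_v range_v sum_v] /yoke_vertexP[size_u range_u sum_u].
move=> congr_0 eq_mid.
have eq_bucket j : (j < m.+2)%N -> is_bucket m j ->
    (n%:Z %| v`_j - u`_j)%Z -> v`_j = u`_j.
  move=> lt_j bucket_j; apply: bucket_eq.
    by have := range_v j lt_j; rewrite bucket_j.
  by have := range_u j lt_j; rewrite bucket_j.
have eq_low j : (j <= m)%N -> v`_j = u`_j.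
  by case: j => [_ | j le_j]; [exact: eq_bucket | exact: eq_mid].
apply: (@eq_from_nth _ 0) => [|j]; first by rewrite size_v size_u.
rewrite size_v ltnS leq_eqVlt => /orP[/eqP-> | ]; last exact: eq_low.
apply: eq_bucket => //; first by rewrite /is_bucket eqxx orbT.
move: (rpredB sum_v sum_u); rewrite (big_ord_recr m.+1) (big_ord_recr m.+1) /=.
rewrite (eq_bigr (fun l : 'I_m.+1 => u`_l)) => [|l _]; last exact: eq_low (ltn_ord l).
by rewrite opprD addrACA subrr add0r.
Qed.

Lemma eq_of_flow_zero n m b v u : Yvert n m v -> Yvert n m u ->
  initial_flow n v u b -> (forall j, (j <= m)%N -> flow b v u j = 0) ->
  v = u.
Proof.
move=> Yv Yu init_b flow0; apply: (yoke_vertex_eq Yv Yu).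
  by have b0 : b = 0 := flow0 0%N isT; rewrite /initial_flow b0 sub0r rpredN in init_b.
case=> // j /andP[_ le_j]; have := flow0 j.+1 le_j.
by rewrite /= flow0 ?(ltnW le_j) // add0r => /eqP; rewrite subr_eq0 => /eqP.
Qed.

Lemma walk_of_flow_cost n m k v u : (0 < n)%N -> Yvert n m v -> Yvert n m u ->
  flow_cost_le n m v u k ->
  exists2 j, (j <= k)%N & walk (Yvert n m) (yoke_adj n m) j v u.
Proof.
move=> n_gt0; elim: k v u => [|k IH] v u Yv Yu [b init_b pot_b].
  exists 0%N => //; split=> //; apply: (eq_of_flow_zero Yv Yu init_b) => j le_j.
  by have := norm_flow_le_potential b v u le_j; move: pot_b; set F := flow b v u j; lia.
have [flow0 | [i le_i F_i]] : (forall j, (j <= m)%N -> flow b v u j = 0) \/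
    exists2 i, (i <= m)%N & flow b v u i != 0.
  case: (boolP [forall i : 'I_m.+1, flow b v u i == 0]).
    move=> /forallP flow0; left=> j le_j.
    by apply/eqP: (flow0 (Ordinal (le_j : (j < m.+1)%N))).
  by move=> /forallPn[i F_i]; right; exists i; rewrite ?leq_ord.
  by exists 0%N => //; split=> //; exact: eq_of_flow_zero Yv Yu init_b flow0.
have [F_pos | F_neg] : 0 < flow b v u i \/ 0 < flow (- b) u v i.
  by rewrite flow_sym; move: F_i; set F := flow b v u i; lia.
  have [v' [Yv' adj_vv' cost_v']] := push_step Yv Yu n_gt0 init_b le_i F_pos pot_b.
  have [j le_j walk_j] := IH _ _ Yv' Yu cost_v'.
  by exists j.+1 => //; exists v'.
have pot_b' : potential m (- b) u v <= k.+1%:Z by rewrite potential_sym.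
have [u' [Yu' adj_uu' cost_u']] :=
  push_step Yu Yv n_gt0 (initial_flow_sym init_b) le_i F_neg pot_b'.
have [j le_j walk_j] := IH _ _ Yv Yu' (flow_cost_le_sym cost_u').
by exists j.+1 => //; exact: walk_rcons walk_j (yoke_adj_sym adj_uu') Yu.
Qed.

Unset Implicit Arguments.

Theorem lemma5p21 (n m : nat) (v u : seq int) :
  (1 <= n)%N -> Yvert n m v -> Yvert n m u ->
  Zvert n m (vdiff n m v u) /\
  (forall k : nat,
     is_dist (Yvert n m) (yoke_adj n m) v u k <->
     is_dist (Zvert n m) (yoke_adj n m) (vdiff n m v u) (zero_vertex m) k).
Proof.
move=> n_gt0 Yv Yu; split; first exact: Zvert_vdiff.
apply: is_dist_transfer => j; first exact: walk_vdiff.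
by move/flow_cost_le_walk/flow_cost_le_vdiff; exact: walk_of_flow_cost.
Qed.
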